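(* Let $n\ge1$ and let $X,Y$ be distinct elements of the group completion $K(\widetilde{Sp}(\mathbb{R}^n\times\mathbb{R}^n))$. Then there exists $(\mathbf a,\mathbf b)\in\mathbb{N}_+^n\times\mathbb{N}^n$ with $\varphi_X(p_{\mathbf a,\mathbf b})\neq\varphi_Y(p_{\mathbf a,\mathbf b})$.
   Context: A pair $(\mathbf z,\mathbf z')\in\mathbb{R}^n\times\mathbb{R}^n$ is degenerate if $z_j=z'_j$ for some $j$. $\widetilde{Sp}(\mathbb{R}^n\times\mathbb{R}^n)$ is the commutative monoid (under multiset union) of finite multisets of points of $\mathbb{R}^n\times\mathbb{R}^n$ modulo the equivalence relation generated by adding or removing degenerate pairs. Its group completion $K(\widetilde{Sp}(\mathbb{R}^n\times\mathbb{R}^n))$ consists of pairs $(X_+,X_-)$ modulo $(X_+,X_-)\sim(Y_+,Y_-)$ iff $X_++Y_-=Y_++X_-$. For $\mathbf a\in\mathbb{N}_+^n$ (all $a_j\ge1$), $\mathbf b\in\mathbb{N}^n$ and a multiset $X=\{(\mathbf x_i,\mathbf y_i)\}_{i=1}^r$, $p_{\mathbf a,\mathbf b}(X)=\sum_{i=1}^r\prod_{j=1}^n(y_{ij}-x_{ij})^{a_j}(y_{ij}+x_{ij})^{b_j}$, which is well defined on $\widetilde{Sp}$. For $X=(X_+,X_-)$, $\varphi_X(p_{\mathbf a,\mathbf b})=p_{\mathbf a,\mathbf b}(X_+)-p_{\mathbf a,\mathbf b}(X_-)$ (well defined on classes). *)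

From mathcomp Require Import all_boot.
From Stdlib Require Import Reals List Permutation.
Set Implicit Arguments. Unset Strict Implicit. Unset Printing Implicit Defensive.

Definition pt (n : nat) : Type := (('I_n -> R) * ('I_n -> R))%type.

Definition degenerate (n : nat) (z : pt n) : Prop :=
  exists j : 'I_n, fst z j = snd z j.

(* Finite multisets are lists modulo permutation; Sp~ is the quotient by the
   equivalence relation generated by permutation and adding/removing a
   degenerate pair. *)
Inductive sp_equiv (n : nat) : list (pt n) -> list (pt n) -> Prop :=
  | sp_perm : forall l l', Permutation l l' -> sp_equiv l l'
  | sp_add_degen : forall d l, degenerate d -> sp_equiv l (d :: l)
  | sp_sym : forall l l', sp_equiv l l' -> sp_equiv l' l
  | sp_trans : forall l1 l2 l3, sp_equiv l1 l2 -> sp_equiv l2 l3 -> sp_equiv l1 l3.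

(* Elements of the group completion K(Sp~): pairs (X+, X-). *)
Definition Kel (n : nat) : Type := (list (pt n) * list (pt n))%type.

Definition K_equiv (n : nat) (X Y : Kel n) : Prop :=
  sp_equiv (fst X ++ snd Y) (fst Y ++ snd X).

Definition p_ab (n : nat) (a b : 'I_n -> nat) (X : list (pt n)) : R :=
  fold_right Rplus 0%R
    (map (fun z : pt n =>
            \big[Rmult/1%R]_(j < n)
              (((snd z j - fst z j) ^ (a j)) * ((snd z j + fst z j) ^ (b j)))%R)
         X).

Definition phi (n : nat) (X : Kel n) (a b : 'I_n -> nat) : R :=
  (p_ab a b (fst X) - p_ab a b (snd X))%R.

(* The moments p_{a,b} with a_j >= 1 are exactly the integrals of
   F(z,z') * (z'-z)^a (z'+z)^b against the signed counting measure of
   X+ + Y- - Y+ - X-, where F = prod_j (z'_j - z_j) vanishes precisely on the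
   degenerate pairs.  If all these moments agree, multiplying F by linear
   factors (z'_j - z_j) - c and (z'_j + z_j) - c (which keeps the moments equal)
   produces a weight that is nonzero at one nondegenerate point w and zero at
   every other point present; the degree-0 moment then shows that w occurs on
   both sides.  Cancelling w, or discarding a degenerate pair, and inducting on
   the total number of points gives X+ + Y- = Y+ + X- in Sp~. *)
From mathcomp Require Import all_boot.
From Stdlib Require Import Reals List Permutation.
From HB Require Import structures.
From mathcomp Require Import zify.
From Stdlib Require Import Classical FunctionalExtensionality Lra Lia.

HB.instance Definition _ := Monoid.isComLaw.Build R 1%R Rmult
  (fun x y z => esym (Rmult_assoc x y z)) Rmult_comm Rmult_1_l.

Section ListSum.
Variable T : Type.
Local Open Scope R_scope.

Definition lsum (f : T -> R) (L : list T) : R := fold_right Rplus 0 (List.map f L).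

Lemma lsum_cons f w L : lsum f (w :: L) = f w + lsum f L.
Proof. by []. Qed.

Lemma lsum_app f L M : lsum f (L ++ M)%list = lsum f L + lsum f M.
Proof. by elim: L => [|w L IH] /=; rewrite ?lsum_cons ?IH /lsum /=; lra. Qed.

Lemma lsum_perm f L M : Permutation L M -> lsum f L = lsum f M.
Proof.
elim=> [|x l l' _ IH|x y l|l l' l'' _ IH1 _ IH2] //.
- by rewrite !lsum_cons IH.
- rewrite !lsum_cons; lra.
- by rewrite IH1.
Qed.

Lemma lsum_ext f g L : (forall w, f w = g w) -> lsum f L = lsum g L.
Proof. by move=> fg; elim: L => [|w L IH] //; rewrite !lsum_cons fg IH. Qed.

Lemma lsum_subZ f g c L :
  lsum (fun w => f w - c * g w) L = lsum f L - c * lsum g L.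
Proof. by elim: L => [|w L IH]; rewrite ?lsum_cons ?IH /lsum /=; lra. Qed.

Lemma lsum_eq0 f L : (forall w, In w L -> f w = 0) -> lsum f L = 0.
Proof.
elim: L => [|w L IH] f0 //; rewrite lsum_cons f0 ?IH; first lra.
- by move=> q Lq; apply: f0; right.
- by left.
Qed.

Lemma lsum_supported1 f w0 L : (forall w, In w L -> w <> w0 -> f w = 0) ->
  exists k : nat, lsum f L = f w0 * INR k /\ (In w0 L -> (0 < k)%coq_nat).
Proof.
elim: L => [|w L IH] f0; first by exists O; split=> //; rewrite /lsum /=; ring.
have [|k [Lk kpos]] := IH; first by move=> q Lq; apply: f0; right.
rewrite lsum_cons Lk; case: (classic (w = w0)) => [->|ww0].
  by exists k.+1; split=> [|_]; [rewrite S_INR; ring | lia].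
exists k; split; first by rewrite f0 /=; [ring | left | ].
by case=> // w0L; apply: kpos.
Qed.

End ListSum.

Arguments lsum {T}.
Arguments lsum_ext {T f g L}.
Arguments lsum_perm {T} f {L M}.

Section Moments.
Variable n : nat.
Local Open Scope R_scope.

Definition coord_diff (w : pt n) j := snd w j - fst w j.
Definition coord_sum (w : pt n) j := snd w j + fst w j.

Definition monomial (w : pt n) (a b : 'I_n -> nat) :=
  \big[Rmult/1]_(j < n) (coord_diff w j ^ a j * coord_sum w j ^ b j).

Definition diff_prod (w : pt n) := \big[Rmult/1]_(j < n) coord_diff w j.

Definition incr_at (a : 'I_n -> nat) j := fun i => if i == j then (a i).+1 else a i.

Lemma big_Rmult_delta (j : 'I_n) c :
  \big[Rmult/1]_(i < n) (if i == j then c else 1) = c.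
Proof. by rewrite (bigD1 j) //= eqxx big1 ?Rmult_1_r // => i /negbTE ->. Qed.

Lemma monomial_mul_factor (w : pt n) a b a' b' j c :
  (forall i, coord_diff w i ^ a' i * coord_sum w i ^ b' i =
     coord_diff w i ^ a i * coord_sum w i ^ b i * if i == j then c else 1) ->
  monomial w a' b' = monomial w a b * c.
Proof.
by move=> E; rewrite /monomial -[X in _ = _ * X](big_Rmult_delta j) -big_split;
  apply: eq_bigr => i _.
Qed.

Lemma monomial_incr_diff w a b j :
  monomial w (incr_at a j) b = monomial w a b * coord_diff w j.
Proof. by apply: (@monomial_mul_factor w a b _ _ j) => i; rewrite /incr_at; case: eqP => [->|_] /=; ring. Qed.

Lemma monomial_incr_sum w a b j :
  monomial w a (incr_at b j) = monomial w a b * coord_sum w j.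
Proof. by apply: (@monomial_mul_factor w a b _ _ j) => i; rewrite /incr_at; case: eqP => [->|_] /=; ring. Qed.

Lemma monomial0 w : monomial w (fun _ => O) (fun _ => O) = 1.
Proof. by rewrite /monomial big1 // => i _ /=; ring. Qed.

Definition same_moments (G : pt n -> R) L M := forall a b,
  lsum (fun w => G w * monomial w a b) L = lsum (fun w => G w * monomial w a b) M.

Lemma same_moments_sym {G L M} : same_moments G L M -> same_moments G M L.
Proof. by move=> GLM a b; rewrite GLM. Qed.

Lemma same_moments_lsum {G L M} : same_moments G L M -> lsum G L = lsum G M.
Proof.
have E w : G w * monomial w (fun _ => O) (fun _ => O) = G w by rewrite monomial0; ring.
by move/(_ (fun _ => O) (fun _ => O)); rewrite !(lsum_ext E).
Qed.

Lemma same_moments_cons {G w L M} :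
  same_moments G (w :: L) (w :: M) -> same_moments G L M.
Proof. by move=> GLM a b; have := GLM a b; rewrite !lsum_cons; lra. Qed.

Lemma same_moments_perm {G L L' M} :
  Permutation L L' -> same_moments G L M -> same_moments G L' M.
Proof. by move=> LL' GLM a b; rewrite -(lsum_perm _ LL') GLM. Qed.

Lemma same_moments_mul_diff G L M j c : same_moments G L M ->
  same_moments (fun w => G w * (coord_diff w j - c)) L M.
Proof.
move=> GLM a b.
have E w : G w * (coord_diff w j - c) * monomial w a b =
    G w * monomial w (incr_at a j) b - c * (G w * monomial w a b).
  by rewrite monomial_incr_diff; ring.
by rewrite !(lsum_ext E) !lsum_subZ !GLM.
Qed.

Lemma same_moments_mul_sum G L M j c : same_moments G L M ->
  same_moments (fun w => G w * (coord_sum w j - c)) L M.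
Proof.
move=> GLM a b.
have E w : G w * (coord_sum w j - c) * monomial w a b =
    G w * monomial w a (incr_at b j) - c * (G w * monomial w a b).
  by rewrite monomial_incr_sum; ring.
by rewrite !(lsum_ext E) !lsum_subZ !GLM.
Qed.

Lemma pt_neq_coord {q w : pt n} : q <> w ->
  exists j, coord_diff q j <> coord_diff w j \/ coord_sum q j <> coord_sum w j.
Proof.
move=> qw; apply: NNPP => same; apply: qw.
have coordE j : fst q j = fst w j /\ snd q j = snd w j.
  have [D S] : coord_diff q j = coord_diff w j /\ coord_sum q j = coord_sum w j.
    by split; apply: NNPP => ne; apply: same; exists j; tauto.
  by rewrite /coord_diff /coord_sum in D S; split; lra.
case: q w coordE {same} => [q1 q2] [w1 w2] /= coordE.
by f_equal; apply: functional_extensionality => j; case: (coordE j).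
Qed.

(* Interpolation: each point of Q other than w0 is killed by one linear factor
   that does not vanish at w0. *)
Lemma separating_weight {F L M w0} (Q : list (pt n)) :
  same_moments F L M -> F w0 <> 0 ->
  exists G, [/\ same_moments G L M, G w0 <> 0 &
                forall q, In q Q -> q <> w0 -> G q = 0].
Proof.
move=> FLM Fw0; elim: Q => [|q Q [G [GLM Gw0 GQ]]]; first by exists F.
case: (classic (q = w0)) => [->|qw0].
  by exists G; split=> // q' [<-|]; [|apply: GQ].
have factor_neq0 x c : x <> c -> G w0 * (x - c) <> 0.
  by move=> xc; apply: Rmult_integral_contrapositive; split=> //; lra.
have GQ_mul x q' : In q' Q -> q' <> w0 -> G q' * x = 0 by move=> *; rewrite GQ //; ring.
case: (pt_neq_coord qw0) => j [D|S].
- exists (fun w => G w * (coord_diff w j - coord_diff q j)); split.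
  + exact: same_moments_mul_diff.
  + by apply: factor_neq0; apply: not_eq_sym.
  + by move=> q' [<- _|]; [ring | apply: GQ_mul].
- exists (fun w => G w * (coord_sum w j - coord_sum q j)); split.
  + exact: same_moments_mul_sum.
  + by apply: factor_neq0; apply: not_eq_sym.
  + by move=> q' [<- _|]; [ring | apply: GQ_mul].
Qed.

Lemma mem_of_same_moments {F L M w0} :
  same_moments F L M -> F w0 <> 0 -> In w0 L -> In w0 M.
Proof.
move=> FLM Fw0 w0L; apply: NNPP => w0M.
have [G [GLM Gw0 Gsupp]] := separating_weight (L ++ M)%list FLM Fw0.
have [|k [Lk kpos]] := @lsum_supported1 _ G w0 L.
  by move=> q Lq; apply: Gsupp; apply: in_or_app; left.
have M0 : lsum G M = 0.
  apply: lsum_eq0 => q Mq; apply: Gsupp; first by apply: in_or_app; right.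
  by move=> qw0; apply: w0M; rewrite -qw0.
have := same_moments_lsum GLM; rewrite Lk M0.
by apply: Rmult_integral_contrapositive; split=> //; apply: not_0_INR; have := kpos w0L; lia.
Qed.

Lemma diff_prod_degenerate w : degenerate w -> diff_prod w = 0.
Proof. by case=> j wj; rewrite /diff_prod (bigD1 j) //= /coord_diff wj; ring. Qed.

Lemma diff_prod_neq0 w : ~ degenerate w -> diff_prod w <> 0.
Proof.
move=> ndeg; apply: (big_ind (fun x => x <> 0)); first lra.
  by move=> x y x0 y0; apply: Rmult_integral_contrapositive.
by move=> j _; rewrite /coord_diff => w0; apply: ndeg; exists j; lra.
Qed.

Lemma mem_of_same_diff_moments {L M w} : same_moments diff_prod L M ->
  ~ degenerate w -> In w L -> In w M.
Proof. by move=> LM /diff_prod_neq0; apply: mem_of_same_moments LM. Qed.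

Lemma sp_equiv_cons (w : pt n) L M : sp_equiv L M -> sp_equiv (w :: L) (w :: M).
Proof.
elim=> {L M} [l l' P|d l dd|l l' _ IH|l1 l2 l3 _ IH1 _ IH2].
- exact/sp_perm/perm_skip.
- apply: (@sp_trans _ _ (d :: w :: l)); first exact: sp_add_degen.
  exact/sp_perm/perm_swap.
- exact: sp_sym.
- exact: sp_trans IH1 IH2.
Qed.

Lemma remove_degenerate {L M} : same_moments diff_prod L M ->
  (exists d, In d L /\ degenerate d) ->
  exists L', [/\ sp_equiv L' L, same_moments diff_prod L' M &
                 (length L' < length L)%coq_nat].
Proof.
move=> LM [d [dL dd]]; case: (in_split _ _ dL) => l1 [l2 EL]; subst L.
have P := Permutation_middle l1 l2 d.
exists (l1 ++ l2)%list; split.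
- exact: sp_trans (sp_add_degen _ dd) (sp_perm P).
- apply: (same_moments_cons (w := d)) => a b.
  rewrite (same_moments_perm (Permutation_sym P) LM a b) lsum_cons.
  by rewrite diff_prod_degenerate //; ring.
- by rewrite !length_app /=; lia.
Qed.

Lemma sp_equiv_of_same_moments L M :
  same_moments diff_prod L M -> sp_equiv L M.
Proof.
have [k size_k] : exists k, (length L + length M <= k)%coq_nat by eexists; apply: le_n.
elim: k L M size_k => [|k IH] L M size_k LM.
  case: L M size_k LM => [|? ?] [|? ?] /= size_k _; try lia.
  exact/sp_perm/perm_nil.
case: (classic (exists d, In d L /\ degenerate d)) => [Ldeg|Lndeg].
  have [L' [L'L L'M sizeL']] := remove_degenerate LM Ldeg.
  by apply: sp_trans (sp_sym L'L) (IH L' M _ L'M); lia.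
case: (classic (exists d, In d M /\ degenerate d)) => [Mdeg|Mndeg].
  have [M' [M'M M'L sizeM']] := remove_degenerate (same_moments_sym LM) Mdeg.
  by apply/sp_sym/(sp_trans (sp_sym M'M) (IH M' L _ M'L)); lia.
case: L size_k LM Lndeg => [|w L] size_k LM Lndeg.
  case: M {size_k} LM Mndeg => [|w M] LM Mndeg; first exact: sp_perm.
  suff : In w [::] by [].
  apply: (mem_of_same_diff_moments (same_moments_sym LM)); last exact: in_eq.
  by move=> wd; apply: Mndeg; exists w; split; first exact: in_eq.
have wM : In w M.
  apply: (mem_of_same_diff_moments LM); last exact: in_eq.
  by move=> wd; apply: Lndeg; exists w; split; first exact: in_eq.
case: (in_split _ _ wM) => m1 [m2 EM]; subst M.
have P := Permutation_middle m1 m2 w.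
apply: (sp_trans _ (sp_perm P)); apply/sp_equiv_cons/IH.
  by move: size_k; rewrite /= !length_app /=; lia.
apply/(same_moments_cons (w := w))/same_moments_sym.
exact: same_moments_perm (Permutation_sym P) (same_moments_sym LM).
Qed.

Lemma p_ab_succ a b L :
  p_ab (fun i => (a i).+1) b L = lsum (fun w => diff_prod w * monomial w a b) L.
Proof.
apply: lsum_ext => w; rewrite /diff_prod /monomial -big_split /=.
by apply: eq_bigr => i _; rewrite /coord_diff /coord_sum /=; ring.
Qed.

End Moments.

Theorem lemma4p7 (n : nat) (hn : (1 <= n)%N) (X Y : Kel n) :
  ~ K_equiv X Y ->
  exists (a b : 'I_n -> nat),
    (forall j : 'I_n, (1 <= a j)%N) /\ phi X a b <> phi Y a b.
Proof.
move=> XY; apply: NNPP => phi_eq; apply/XY/sp_equiv_of_same_moments => a b.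
have phiE : phi X (fun i => (a i).+1) b = phi Y (fun i => (a i).+1) b.
  by apply: NNPP => ne; apply: phi_eq; exists (fun i => (a i).+1), b.
by move: phiE; rewrite /phi !lsum_app -!p_ab_succ; lra.
Qed.
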